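(* Suppose that for some instance of the SEJR subfamily, Alg3 uses $O(o_3)$ arithmetic operations. Then the instance can be computed using $O(nmk+o_3)$ arithmetic operations, when dissatisfaction levels are maintained as follows: initially $\ell(c,\emptyset)=\lfloor kn_c/n\rfloor$, and after each addition to $W$, for each $c\in C\setminus W$ the stored value is decremented by 1 while it exceeds $\lfloor\frac{k}{n}|\{i: c\in A_i,\ |A_i\cap W|<\text{(stored value)}\}|\rfloor$.
   Context: Setting: voters $N=\{1,\dots,n\}$, candidates $C=\{c_1,\dots,c_m\}$, approval ballots $A_i\subseteq C$, $k\le m$ a positive integer, $N_c=\{i: c\in A_i\}$, $n_c=|N_c|$. The profile is given as an $n\times m$ 0/1 table, and the counts $|A_i\cap W|$ are stored in an array of $n$ counters updated when a candidate is added; complexity counts arithmetic operations. Dissatisfaction level: for $W\subseteq C$ with $|W|\le k$ and $c\in C\setminus W$, $\ell(c,W)$ is the largest nonnegative integer $\ell$ with $\ell=\lfloor \frac{k}{n}|\{i\in N: c\in A_i,\ |A_i\cap W|<\ell\}|\rfloor$. SEJR subfamily (parametrized by a subprocedure Alg3): start with $W=\emptyset$. While $|W|<k$ and $\max_{c\in C\setminus W}\ell(c,W)>0$, add to $W$ a candidate $c\in C\setminus W$ maximizing $\ell(c,W)$ (ties broken arbitrarily). Afterwards, if $|W|<k$, Alg3 adds candidates from $C\setminus W$ until $|W|=k$. Output $W$. *)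

From mathcomp Require Import all_boot.
Set Implicit Arguments. Unset Strict Implicit. Unset Printing Implicit Defensive.

(* Setting: voters 'I_n, candidates 'I_m, approval profile as an n x m 0/1   *)
(* table  A : 'I_n -> 'I_m -> bool  (A i c  <=>  c \in A_i).                 *)

Section SEJR.
Variables (n m k : nat) (A : 'I_n -> 'I_m -> bool).

Definition below_count (W : {set 'I_m}) (c : 'I_m) (l : nat) : nat :=
  #|[set i : 'I_n | A i c && (#|[set x in W | A i x]| < l)]|.

(* The dissatisfaction level l(c,W): the largest nonnegative integer l with
   l = floor (k/n * below_count W c l).  Any such l satisfies l <= k (the count
   is at most n), and l = 0 always qualifies, so the max over l < k.+1 is the
   largest solution. *)
Definition ell (W : {set 'I_m}) (c : 'I_m) : nat :=
  \max_(l < k.+1 | val l == k * below_count W c l %/ n) val l.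

Definition greedy_step (W W' : {set 'I_m}) : Prop :=
  #|W| < k /\
  exists2 c, c \notin W &
    [/\ 0 < ell W c, (forall c', c' \notin W -> ell W c' <= ell W c)
      & W' = c |: W].

Definition greedy_stopped (W : {set 'I_m}) : Prop :=
  ~ (#|W| < k /\ exists2 c, c \notin W & 0 < ell W c).

Inductive greedy_reach : {set 'I_m} -> {set 'I_m} -> Prop :=
| gr_refl W : greedy_reach W W
| gr_step W W' W'' : greedy_step W W' -> greedy_reach W' W'' -> greedy_reach W W''.

(* Alg3 : a subprocedure receiving the current committee W and returning the
   candidates it adds, together with the number of arithmetic operations it used. *)
Definition alg3_type := {set 'I_m} -> seq 'I_m * nat.

Definition sejr_output (Alg3 : alg3_type) (Wout : {set 'I_m}) : Prop :=
  exists W0, [/\ greedy_reach set0 W0, greedy_stopped W0 &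
    Wout = if #|W0| < k then W0 :|: [set x in (Alg3 W0).1] else W0].

(* Cost-instrumented implementation.  Every primitive operation (table       *)
(* lookup, counter read/update, comparison, addition, multiplication,        *)
(* division, decrement, set membership test / insertion) is charged 1.       *)
(* Functions return (result, number of operations).                          *)

(* |{ i : A i c, cW i < l }| computed by a scan over the voters;
   per voter: table lookup, counter read + comparison, addition. *)
Definition impl_count (cW : 'I_n -> nat) (c : 'I_m) (l : nat) : nat * nat :=
  foldr (fun i acc => (acc.1 + (A i c && (cW i < l)), acc.2 + 3)) (0, 0)
        (enum 'I_n).

(* does the stored value l exceed floor(k/n * |{...}|) ?
   (multiplication, division, comparison) *)
Definition impl_exceeds (cW : 'I_n -> nat) (c : 'I_m) (l : nat) : bool * nat :=
  let: (x, cst) := impl_count cW c l in (k * x %/ n < l, cst + 3).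

Fixpoint impl_decr (fuel : nat) (cW : 'I_n -> nat) (c : 'I_m) (l : nat)
  : nat * nat :=
  match fuel with
  | 0 => (l, 0)
  | f.+1 =>
      let: (b, cst) := impl_exceeds cW c l in
      if b then let: (l', cst') := impl_decr f cW c l.-1 in (l', cst + 1 + cst')
      else (l, cst)
  end.

(* initial value floor(k n_c / n): n_c by a scan (lookup, addition per voter),
   then a multiplication and a division. *)
Definition impl_init_level (c : 'I_m) : nat * nat :=
  let: (nc, cst) := foldr (fun i acc => (acc.1 + A i c, acc.2 + 2)) (0, 0)
                            (enum 'I_n) in
  (k * nc %/ n, cst + 2).

Record state := State {
  stW : {set 'I_m};
  stsz : nat;
  stcW : 'I_n -> nat;        (* counters |A_i \cap W| *)
  stlv : 'I_m -> nat }.      (* stored dissatisfaction levels *)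

Definition impl_init : state * nat :=
  let lvc := fun c => impl_init_level c in
  (State set0 0 (fun _ => 0) (fun c => (lvc c).1),
   \sum_(c < m) (lvc c).2 + n).

(* find a candidate not in W with maximal stored value (the first one in
   index order); per candidate: membership test and comparison. *)
Definition impl_best (st : state) : option ('I_m * nat) * nat :=
  foldl (fun acc c =>
           let: (best, cst) := acc in
           if c \in stW st then (best, cst + 1) else
           match best with
           | None => (Some (c, stlv st c), cst + 2)
           | Some (_, v) => if v < stlv st c then (Some (c, stlv st c), cst + 2)
                            else (best, cst + 2)
           end) (None, 0) (enum 'I_m).

(* add c to W: insertion, size increment, counter updates
   (lookup + addition per voter), then update every stored value. *)
Definition impl_add (st : state) (c : 'I_m) : state * nat :=
  let W' := c |: stW st in
  let cW' := fun i => stcW st i + A i c in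
  let upd := fun c' => if c' \in W' then (stlv st c', 1)
                       else let: (l, cst) := impl_decr k.+1 cW' c' (stlv st c') in
                            (l, cst + 1) in
  (State W' (stsz st).+1 cW' (fun c' => (upd c').1),
   2 + 2 * n + \sum_(c' < m) (upd c').2).

Fixpoint impl_loop (fuel : nat) (st : state) : state * nat :=
  match fuel with
  | 0 => (st, 0)
  | f.+1 =>
      if stsz st < k then
        let: (ob, cb) := impl_best st in
        match ob with
        | Some (c, v) =>
            if 0 < v then
              let: (st', ca) := impl_add st c in
              let: (st'', cr) := impl_loop f st' in
              (st'', 1 + cb + 1 + ca + cr)
            else (st, 1 + cb + 1)
        | None => (st, 1 + cb)
        end
      else (st, 1)
  end.

(* Full implementation: returns (output, total operations, operations of Alg3). *)
Definition impl_sejr (Alg3 : alg3_type) : {set 'I_m} * nat * nat :=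
  let: (st0, c0) := impl_init in
  let: (st, cl) := impl_loop k st0 in
  if stsz st < k then
    let: (s, c3) := Alg3 (stW st) in
    (stW st :|: [set x in s], c0 + cl + 1 + c3, c3)
  else (stW st, c0 + cl + 1, 0).

End SEJR.

From mathcomp Require Import all_boot zify.
Set Implicit Arguments. Unset Strict Implicit. Unset Printing Implicit Defensive.

(* Stored levels always equal the current ell(c, W).  ell(c, W) is the greatest
   fixpoint below k of the monotone map l |-> floor(k/n |{i : c in A_i,
   |A_i cap W| < l}|), and this map only decreases when W grows; so starting
   from the old level and decrementing while the value exceeds the map stops
   exactly at the new level.  Each threshold test is a scan of the n voters,
   and every decrement lowers the potential "sum of stored levels outside W",
   which starts at most mk.  Amortizing against it, the greedy phase costs
   O(nm) per round for at most k rounds plus O(n) per decrement for at most mk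
   decrements, i.e. O(nmk) in total. *)

Lemma card_set_count (T : finType) (P : pred T) : #|[set x | P x]| = count P (enum T).
Proof. by rewrite cardsE cardE -size_filter enumT. Qed.

Lemma foldr_count_cost (T : Type) (P : pred T) (a : nat) (s : seq T) :
  foldr (fun x acc => (acc.1 + P x, acc.2 + a)) (0, 0) s = (count P s, a * size s).
Proof. by elim: s => [|x s IH] //=; rewrite ?muln0 // IH mulnS addnC [a + _]addnC. Qed.

Section ArgMax.
Variables n m : nat.
Implicit Types (st : state n m) (s : seq 'I_m).

Definition best_update st (acc : option ('I_m * nat) * nat) (c : 'I_m) :=
  let: (best, cst) := acc in
  if c \in stW st then (best, cst + 1) else
  match best with
  | None => (Some (c, stlv st c), cst + 2)
  | Some (_, v) => if v < stlv st c then (Some (c, stlv st c), cst + 2)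
                   else (best, cst + 2)
  end.

Lemma impl_bestE st : impl_best st = foldl (best_update st) (None, 0) (enum 'I_m).
Proof. by []. Qed.

Definition best_inv st s (b : option ('I_m * nat)) : Prop :=
  match b with
  | None => {subset s <= stW st}
  | Some (c, v) => [/\ v = stlv st c, c \notin stW st &
                      forall x, x \in s -> x \notin stW st -> stlv st x <= v]
  end.

Lemma foldl_best_update st s :
  best_inv st s (foldl (best_update st) (None, 0) s).1 /\
  (foldl (best_update st) (None, 0) s).2 <= 2 * size s.
Proof.
elim/last_ind: s => [|s x [IHinv IHcost]] //.
rewrite foldl_rcons size_rcons mulnS.
case: (foldl _ _ s) IHinv IHcost => b cost /= hinv hcost.
have mem_r y : (y \in rcons s x) = (y == x) || (y \in s) by rewrite mem_rcons in_cons.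
rewrite /best_update; case: ifP => xW /=.
  split; first case: b hinv => [[c v] [-> cW hmax]|hsub] /=.
  - by split=> // y; rewrite mem_r => /orP[/eqP->|/hmax //]; rewrite xW.
  - by move=> y; rewrite mem_r => /orP[/eqP->|/hsub].
  - lia.
case: b hinv => [[c v] [-> cW hmax]|hsub] /=; last first.
  split; last lia.
  split=> // [|y]; first by rewrite xW.
  by rewrite mem_r => /orP[/eqP-> //|/hsub ->].
case: ltnP => hlt /=; (split; last lia); split; rewrite ?xW //.
- move=> y; rewrite mem_r => /orP[/eqP-> //|/hmax h /h hy].
  exact: leq_trans hy (ltnW hlt).
- by move=> y; rewrite mem_r => /orP[/eqP->|/hmax].
Qed.

Lemma impl_best_spec st :
  best_inv st (enum 'I_m) (impl_best st).1 /\ (impl_best st).2 <= 2 * m.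
Proof.
by rewrite impl_bestE; have := foldl_best_update st (enum 'I_m); rewrite size_enum_ord.
Qed.

End ArgMax.

Section Cost.
Variables (n m k : nat) (A : 'I_n -> 'I_m -> bool).
Hypothesis n_gt0 : 0 < n.
Implicit Types (W : {set 'I_m}) (c : 'I_m) (l : nat).

Definition quota W c l := k * below_count A W c l %/ n.

Lemma below_count_le W c l : below_count A W c l <= n.
Proof. by rewrite /below_count -[X in _ <= X]card_ord max_card. Qed.

Lemma below_count0 W c : below_count A W c 0 = 0.
Proof. by apply/eqP; rewrite cards_eq0; apply/eqP/setP => i; rewrite !inE ltn0 andbF. Qed.

Lemma below_count_mono W c : {homo below_count A W c : l l' / l <= l'}.
Proof.
move=> l l' ll'; apply: subset_leq_card; apply/subsetP => i; rewrite !inE.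
by case/andP=> -> /leq_trans; apply.
Qed.

Lemma below_count_subset W W' c l :
  W \subset W' -> below_count A W' c l <= below_count A W c l.
Proof.
move=> sWW'; apply: subset_leq_card; apply/subsetP => i; rewrite !inE.
case/andP=> -> /=; apply: leq_ltn_trans; apply: subset_leq_card.
by apply/subsetP => x; rewrite !inE => /andP[/(subsetP sWW') -> ->].
Qed.

Lemma quota_le W c l : quota W c l <= k.
Proof.
by rewrite /quota -[X in _ <= X](mulnK k n_gt0) leq_div2r // leq_mul2l below_count_le orbT.
Qed.

Lemma quota_mono W c : {homo quota W c : l l' / l <= l'}.
Proof. by move=> l l' ll'; rewrite leq_div2r // leq_mul2l below_count_mono ?orbT. Qed.

Lemma ell_le W c : ell k A W c <= k.
Proof. by apply/bigmax_leqP => l _; rewrite -ltnS ltn_ord. Qed.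

Lemma ell_fixpoint W c : quota W c (ell k A W c) = ell k A W c.
Proof.
have : 0 < #|[pred l : 'I_k.+1 | val l == quota W c l]|.
  by apply/card_gt0P; exists ord0; rewrite inE /= /quota below_count0 muln0 div0n.
rewrite /ell; case/(eq_bigmax_cond val) => l; rewrite inE => /eqP fix_l ->.
by rewrite {2}fix_l.
Qed.

Lemma fixpoint_le_ell W c l : quota W c l = l -> l <= ell k A W c.
Proof.
move=> fix_l; have lk : l < k.+1 by rewrite ltnS -fix_l quota_le.
by apply: (@leq_bigmax_cond _ _ _ (Ordinal lk)); rewrite /= -{1}fix_l.
Qed.

Lemma postfixpoint_le_ell W c l : l <= quota W c l -> l <= ell k A W c.
Proof.
move: {2}(k - l) (leqnn (k - l)) => d; elim: d l => [|d IH] l hd hl.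
  by apply: fixpoint_le_ell; apply/eqP; rewrite eqn_leq hl; have := quota_le W c l; lia.
case: (ltngtP l (quota W c l)) => [hlt|hgt|heq].
- have := IH _ _ (quota_mono W c hl); have := quota_le W c l; lia.
- by rewrite leqNgt hgt in hl.
- exact: fixpoint_le_ell.
Qed.

Lemma quota_lt W c l : ell k A W c < l -> quota W c l < l.
Proof.
by move=> hl; rewrite ltnNge; apply: contraTN hl => /postfixpoint_le_ell; rewrite -leqNgt.
Qed.

Lemma ell_subset W W' c : W \subset W' -> ell k A W' c <= ell k A W c.
Proof.
move=> sWW'; apply: postfixpoint_le_ell; rewrite -{1}ell_fixpoint.
by rewrite leq_div2r // leq_mul2l below_count_subset ?orbT.
Qed.

Lemma ell_set0 c : ell k A set0 c = k * #|[set i | A i c]| %/ n.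
Proof.
have below_set0 l : 0 < l -> below_count A set0 c l = #|[set i | A i c]|.
  move=> l_gt0; apply: eq_card => i; rewrite !inE.
  rewrite (_ : [set x in set0 | A i x] = set0) ?cards0 ?l_gt0 ?andbT //.
  by apply/setP => x; rewrite !inE.
apply/eqP; rewrite eqn_leq; apply/andP; split.
  case: (posnP (ell k A set0 c)) => [-> //|ell_gt0].
  by rewrite -ell_fixpoint /quota below_set0.
case: (posnP (k * #|[set i | A i c]| %/ n)) => [-> //|q_gt0].
by apply: postfixpoint_le_ell; rewrite /quota below_set0.
Qed.

Definition load W i := #|[set x in W | A i x]|.

Lemma load_setU1 W c i : c \notin W -> load (c |: W) i = load W i + A i c.
Proof.
move=> cW; rewrite /load; case Aic: (A i c) => /=.
  rewrite (_ : [set x in c |: W | A i x] = c |: [set x in W | A i x]).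
    by rewrite cardsU1 inE (negbTE cW) addnC.
  by apply/setP => x; rewrite !inE; case: eqP => // ->; rewrite Aic.
rewrite addn0; apply: eq_card => x; rewrite !inE.
by case: (x =P c) => [->|]; rewrite ?Aic ?andbF //= (negbTE cW).
Qed.

Lemma impl_countE W cW c l : cW =1 load W ->
  impl_count A cW c l = (below_count A W c l, 3 * n).
Proof.
move=> cWE; rewrite /impl_count (foldr_count_cost (fun i => A i c && (cW i < l))).
by rewrite size_enum_ord /below_count card_set_count; under eq_count do rewrite cWE.
Qed.

(* One threshold test: a scan of the voters plus three operations. *)
Definition test_cost := 3 * n + 3.

(* Decrementing stops exactly at [ell], since [quota l < l] for every [l > ell]
   while [ell] is a fixpoint. *)
Lemma impl_decrE W cW c fuel l : cW =1 load W ->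
  ell k A W c <= l -> l - ell k A W c < fuel ->
  impl_decr k A fuel cW c l =
    (ell k A W c, (l - ell k A W c) * test_cost.+1 + test_cost).
Proof.
move=> cWE; elim: fuel l => [|f IH] l // ell_le_l l_fuel.
rewrite /= /impl_exceeds (impl_countE _ _ cWE) -/(quota W c l).
have [ell_lt|l_lt|<-] := ltngtP (ell k A W c) l; last first.
- by rewrite ell_fixpoint ltnn subnn.
- by rewrite ltnNge ell_le_l in l_lt.
rewrite quota_lt // IH; [|lia|lia].
by congr (_, _); rewrite /test_cost; nia.
Qed.

Definition data_ok (st : state n m) :=
  stcW st =1 load (stW st) /\
  forall c, c \notin stW st -> stlv st c = ell k A (stW st) c.

Definition consistent (st : state n m) :=
  [/\ stsz st = #|stW st|, data_ok st & greedy_reach k A set0 (stW st)].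

Definition potential (st : state n m) :=
  \sum_(c < m) (if c \in stW st then 0 else stlv st c).

(* Amortization: each decrement is paid for by one unit of [potential]. *)
Lemma impl_add_spec st c : data_ok st -> c \notin stW st ->
  let: st' := (impl_add k A st c).1 in
  [/\ stW st' = c |: stW st, stsz st' = (stsz st).+1, data_ok st' &
      (impl_add k A st c).2 + test_cost.+1 * potential st'
        <= 2 + 2 * n + m * test_cost.+1 + test_cost.+1 * potential st].
Proof.
move=> [cW_ok lv_ok] cW; set W := stW st.
have load_ok : (fun i => stcW st i + A i c) =1 load (c |: W).
  by move=> i; rewrite load_setU1 // cW_ok.
have decrE c' : c' \notin c |: W ->
    impl_decr k A k.+1 (fun i => stcW st i + A i c) c' (stlv st c') =
    (ell k A (c |: W) c',
     (ell k A W c' - ell k A (c |: W) c') * test_cost.+1 + test_cost).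
  move=> c'W'; have c'W : c' \notin W by apply: contra c'W'; apply: setU1r.
  have := ell_subset c' (subsetUr [set c] W); have := ell_le W c'.
  by rewrite lv_ok // -/W => ? ?; rewrite (impl_decrE load_ok) //; lia.
rewrite /impl_add; cbn [fst snd stW stsz stcW stlv]; split=> //.
  by split=> // c'; cbn [stW stlv] => c'W'; rewrite (negbTE c'W') decrE.
rewrite /potential; cbn [stW stlv].
rewrite -!addnA !leq_add2l !big_distrr -big_split.
rewrite -[m in m * _]card_ord -sum_nat_const -big_split.
apply: leq_sum => c' _; case: ifP => [c'W'|/negbT c'W'].
  by rewrite /= muln0 addn0 leq_addr.
have c'W : c' \notin W by apply: contra c'W'; apply: setU1r.
rewrite decrE //= (negbTE c'W) lv_ok // -/W.
have := ell_subset c' (subsetUr [set c] W).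
set e' := ell k A (c |: W) c'; set e := ell k A W c'; nia.
Qed.

Lemma greedy_reach_rcons W1 W2 W3 :
  greedy_reach k A W1 W2 -> greedy_step k A W2 W3 -> greedy_reach k A W1 W3.
Proof.
elim=> [W|W W' W'' step _ IH] last_step; last exact: gr_step step (IH last_step).
exact: gr_step last_step (gr_refl _ _ _).
Qed.

Lemma consistent_stopped st : consistent st ->
  k <= stsz st \/ (forall c, c \notin stW st -> stlv st c = 0) ->
  greedy_stopped k A (stW st).
Proof.
case=> sz_ok [_ lv_ok] _ [k_le|lv0] [W_lt [c cW ell_gt0]].
- by move: W_lt; rewrite -sz_ok ltnNge k_le.
- by move: ell_gt0; rewrite -lv_ok // lv0.
Qed.

(* A greedy round: the test [|W| < k], the scan for the best candidate,
   the test of its level and the insertion, decrements excluded. *)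
Definition round_cost := 4 + 2 * m + 2 * n + m * test_cost.+1.

Lemma impl_loop_spec fuel st : consistent st -> k <= stsz st + fuel ->
  [/\ consistent (impl_loop k A fuel st).1,
      greedy_stopped k A (stW (impl_loop k A fuel st).1) &
      (impl_loop k A fuel st).2 + test_cost.+1 * potential (impl_loop k A fuel st).1
        <= fuel * round_cost + test_cost.+1 * potential st].
Proof.
elim: fuel st => [|f IH] st st_ok k_le.
  by split=> //; apply: consistent_stopped => //; left; rewrite -(addn0 (stsz st)).
have [sz_ok [cW_ok lv_ok] reach] := st_ok.
have round_cost_gt0 : 0 < round_cost by [].
cbn [impl_loop]; case: (ltnP (stsz st) k) => [sz_lt|k_le_sz]; last first.
  split=> //=; last by rewrite mulSn; lia.
  by apply: consistent_stopped; [exact: st_ok | left].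
have [best_ok best_cost] := impl_best_spec st.
case: (impl_best st) best_ok best_cost => [[[c v]|] cb];
  cbn [fst snd] => best_ok best_cost; last first.
  split=> //=; last by rewrite mulSn /round_cost; lia.
  by apply: consistent_stopped => //; right=> c /negP[]; apply: best_ok; rewrite mem_enum.
case: best_ok => -> cW lv_max.
case: (posnP (stlv st c)) => [lv0|lv_gt0].
  split=> //=; last by rewrite mulSn /round_cost; lia.
  apply: consistent_stopped => //; right=> c' c'W.
  by apply/eqP; rewrite -leqn0 -lv0 lv_max ?mem_enum.
have := impl_add_spec (conj cW_ok lv_ok) cW.
case: (impl_add k A st c) => st' ca /= [W' sz' data' cost'].
have st'_ok : consistent st'.
  split=> //; first by rewrite sz' W' cardsU1 cW sz_ok.
  rewrite W'; apply: greedy_reach_rcons reach _; split; first by rewrite -sz_ok.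
  exists c => //; split=> //; first by rewrite -lv_ok.
  by move=> c' c'W; rewrite -!lv_ok // lv_max ?mem_enum.
have [] := IH st' st'_ok ltac:(rewrite sz'; lia).
case: (impl_loop k A f st') => st'' cr /= st''_ok stopped cost''.
by split=> //; rewrite mulSn /round_cost in cost'' *; lia.
Qed.

Lemma impl_init_levelE c :
  impl_init_level k A c = (k * #|[set i | A i c]| %/ n, 2 * n + 2).
Proof.
rewrite /impl_init_level (foldr_count_cost (fun i => A i c)).
by rewrite size_enum_ord card_set_count mulnC.
Qed.

Lemma impl_init_consistent : consistent (impl_init k A).1.
Proof.
rewrite /impl_init; cbn [fst stW stsz stcW stlv].
split; [by rewrite cards0 | split | exact: gr_refl]; cbn [stW stcW stlv].
- by move=> i; apply/esym/eqP; rewrite cards_eq0; apply/eqP/setP => x; rewrite !inE.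
- by move=> c _; rewrite impl_init_levelE ell_set0.
Qed.

Lemma impl_init_cost : (impl_init k A).2 = m * (2 * n + 2) + n.
Proof.
rewrite /impl_init /= (eq_bigr (fun _ => 2 * n + 2)) => [|c _].
  by rewrite sum_nat_const card_ord.
by rewrite impl_init_levelE.
Qed.

Lemma potential_le st : consistent st -> potential st <= m * k.
Proof.
case=> _ [_ lv_ok] _; rewrite /potential -[m in m * k]card_ord -sum_nat_const.
by apply: leq_sum => c _; case: ifP => // /negbT cW; rewrite lv_ok ?ell_le.
Qed.

End Cost.

Theorem mainTheorem11 :
  exists C : nat,
  forall (n m k : nat) (A : 'I_n -> 'I_m -> bool) (Alg3 : alg3_type m),
    0 < n -> 0 < k -> k <= m ->
    let: (Wout, ops, ops3) := impl_sejr k A Alg3 in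
    sejr_output k A Alg3 Wout /\ ops <= C * (n * m * k) + ops3.
Proof.
exists 30 => n m k A Alg3 n_gt0 k_gt0 k_le_m.
have init_ok := impl_init_consistent k A n_gt0.
have init_cost := impl_init_cost k A.
have init_potential := potential_le init_ok.
have [loop_ok stopped loop_cost] := impl_loop_spec n_gt0 (fuel := k) init_ok ltac:(lia).
rewrite /impl_sejr; move: init_ok init_cost init_potential loop_ok stopped loop_cost.
case: (impl_init k A) => st0 c0 /= _ -> init_potential.
case: (impl_loop k A k st0) => st cl /= [sz_ok _ reach] stopped loop_cost.
have greedy_cost : m * (2 * n + 2) + n + cl + 1 <= 30 * (n * m * k).
  have : (test_cost n).+1 * potential st0 <= (test_cost n).+1 * (m * k).
    by rewrite leq_mul2l init_potential orbT.
  move: loop_cost; rewrite /round_cost /test_cost; nia.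
case: ifP => [W_lt|W_ge].
  case alg3E: (Alg3 (stW st)) => [s c3]; split; last lia.
  by exists (stW st); rewrite -sz_ok W_lt alg3E.
by split; [exists (stW st); rewrite -sz_ok W_ge | lia].
Qed.
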